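(* Let $0<\delta<\frac12$, and let $T_0$ be an $N_0$-vertex tournament which is $\delta^2$-close to transitive. Then there exist an integer $N\geq(1-\delta)N_0$, an $N$-vertex subtournament $T$ of $T_0$, and an ordered graph $G$ on the vertex set of $T$ such that $G$ is consistent with $T$ and every vertex of $G$ has at most $4\delta N$ non-neighbors in $G$.
   Context: A tournament is an orientation of a complete graph; a subtournament is the tournament induced on a subset of vertices. An $N$-vertex tournament is $\delta$-close to transitive if it can be made transitive by reversing the orientation of at most $\delta N^2$ edges. An ordered graph is a graph with a linear order $\prec$ on its vertex set. An ordered graph $G$ is consistent with a tournament $T$ on the same vertex set if for all vertices $v\prec w$, $vw\in E(G)$ if and only if $v\to w$ in $T$. *)

From mathcomp Require Import all_boot all_order all_algebra.
Set Implicit Arguments. Unset Strict Implicit. Unset Printing Implicit Defensive.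
Import Order.TTheory GRing.Theory Num.Theory.

Definition is_tournament (V : finType) (t : rel V) : Prop :=
  (forall x, ~~ t x x) /\ (forall x y, x != y -> t x y = ~~ t y x).

Definition is_transitive_tournament (V : finType) (t : rel V) : Prop :=
  is_tournament t /\ transitive t.

Definition num_reversed (V : finType) (t t' : rel V) : nat :=
  #|[set p : V * V | t p.1 p.2 && ~~ t' p.1 p.2]|.

Definition close_to_transitive (R : realFieldType) (V : finType) (t : rel V) (d : R)
  : Prop :=
  exists t' : rel V, is_transitive_tournament t' /\
    ((num_reversed t t')%:R <= d * (#|V|%:R) ^+ 2)%R.

Definition strict_linear_order_on (V : finType) (S : {set V}) (lt : rel V) : Prop :=
  (forall x, x \in S -> ~~ lt x x) /\
  (forall x y z, x \in S -> y \in S -> z \in S -> lt x y -> lt y z -> lt x z) /\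
  (forall x y, x \in S -> y \in S -> x != y -> lt x y || lt y x).

Definition simple_graph_on (V : finType) (S : {set V}) (e : rel V) : Prop :=
  (forall x, x \in S -> ~~ e x x) /\
  (forall x y, x \in S -> y \in S -> e x y = e y x).

Definition consistent_with (V : finType) (S : {set V}) (lt e t : rel V) : Prop :=
  forall v w, v \in S -> w \in S -> lt v w -> e v w = t v w.

Definition non_neighbours (V : finType) (S : {set V}) (e : rel V) (v : V) : {set V} :=
  [set w in S | (w != v) && ~~ e v w].

From mathcomp Require Import all_boot all_order all_algebra.
From mathcomp Require Import ring lra.
Set Implicit Arguments. Unset Strict Implicit. Unset Printing Implicit Defensive.
Import Order.TTheory GRing.Theory Num.Theory.

(* Let t be a transitive tournament obtained from t0 by reversing at most
   d^2 n^2 edges, and call a vertex bad when it lies on more than 2 d n of the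
   reversed edges.  The reversed edges have 2 d^2 n^2 endpoints at most, so at
   most d n vertices are bad.  On the good vertices order by t and join v, w
   when t0 and t agree on the pair: a non-neighbour of v is an endpoint of a
   reversed edge at v, so v has at most 2 d n <= 4 d N of them, because
   N >= (1 - d) n >= n / 2. *)

Definition sym_degree (V : finType) (r : rel V) (v : V) : nat :=
  #|[set w | r v w || r w v]|.

Lemma card_rel_sum (V : finType) (r : rel V) :
  #|[set p : V * V | r p.1 p.2]| = \sum_v #|[set w | r v w]|.
Proof.
rewrite -(sum1dep_card (fun p : V * V => r p.1 p.2)).
under [RHS]eq_bigr => v _ do rewrite -(sum1dep_card (r v)).
by rewrite pair_big_dep.
Qed.

Lemma card_rel_sum_converse (V : finType) (r : rel V) :
  #|[set p : V * V | r p.1 p.2]| = \sum_v #|[set w | r w v]|.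
Proof.
rewrite card_rel_sum.
under eq_bigr => v _ do rewrite -(sum1dep_card (r v)) big_mkcond.
under [RHS]eq_bigr => v _ do rewrite -(sum1dep_card (r ^~ v)) big_mkcond.
exact: exchange_big.
Qed.

Lemma sum_sym_degree_le (V : finType) (r : rel V) :
  \sum_v sym_degree r v <= 2 * #|[set p : V * V | r p.1 p.2]|.
Proof.
rewrite mul2n -addnn {1}card_rel_sum card_rel_sum_converse -big_split /=.
apply: leq_sum => v _; apply: leq_trans (leq_card_setU _ _).
by apply: subset_leq_card; apply/subsetP => w; rewrite !inE.
Qed.

Local Open Scope ring_scope.

Lemma card_gt_mul_le_sum (R : numDomainType) (T : finType) (f : T -> R) (c : R) :
  (forall x, 0 <= f x) -> #|[set x | c < f x]|%:R * c <= \sum_x f x.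
Proof.
move=> f_ge0; rewrite mulr_natl -sumr_const.
rewrite [X in _ <= X](bigID (fun x => c < f x)) /= -[X in X <= _]addr0.
apply: lerD; last by apply: sumr_ge0.
rewrite (eq_bigl (fun x => c < f x)) => [|x]; last by rewrite inE.
by apply: ler_sum => x /ltW.
Qed.

Lemma card_high_sym_degree_le (R : numDomainType) (V : finType) (r : rel V) (d : R) :
  0 < d -> #|[set p : V * V | r p.1 p.2]|%:R <= d ^+ 2 * #|V|%:R ^+ 2 ->
  #|[set v | 2 * d * #|V|%:R < (sym_degree r v)%:R]|%:R <= d * #|V|%:R.
Proof.
move=> d_gt0 r_le; set n := #|V|; set B := [set v | _].
have [n0 | n_gt0] := posnP n.
  by move: (max_card B); rewrite -/n n0 leqn0 => /eqP->; rewrite mulr0.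
have dn_gt0 : 0 < 2 * d * n%:R by rewrite !mulr_gt0 // ltr0n.
rewrite -(ler_pM2r dn_gt0).
apply: (le_trans (@card_gt_mul_le_sum _ _ (fun v => (sym_degree r v)%:R) _ _)) => //.
rewrite -natr_sum (le_trans (_ : _ <= (2 * #|[set p : V * V | r p.1 p.2]|)%:R)) //.
  by rewrite ler_nat sum_sym_degree_le.
rewrite natrM (_ : d * n%:R * _ = 2 * (d ^+ 2 * n%:R ^+ 2)); last by ring.
by rewrite ler_pM2l ?ltr0n.
Qed.

Lemma card_setC_ge (R : realDomainType) (V : finType) (B : {set V}) (c : R) :
  #|B|%:R <= c * #|V|%:R -> (1 - c) * #|V|%:R <= #|~: B|%:R.
Proof.
have -> : #|~: B| = (#|V| - #|B|)%N by rewrite -(cardsC B) addKn.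
rewrite natrB ?max_card //; lra.
Qed.

Lemma transitive_tournament_strict_linear_order (V : finType) (S : {set V}) (t : rel V) :
  is_transitive_tournament t -> strict_linear_order_on S t.
Proof.
move=> [[t_irr t_asym] t_tr]; split=> [x _ | ]; first exact: t_irr.
split=> [x y z _ _ _ | x y _ _ xy]; first exact: t_tr.
by rewrite t_asym //; case: (t y x).
Qed.

Definition agreement_graph (V : finType) (t t' : rel V) : rel V :=
  fun v w => (t' v w && t v w) || (t' w v && t w v).

Section AgreementGraph.
Variables (V : finType) (S : {set V}) (t t' : rel V).
Hypothesis t'T : is_tournament t'.

Lemma agreement_graph_simple : simple_graph_on S (agreement_graph t t').
Proof.
split=> [x _ | x y _ _]; last by rewrite /agreement_graph orbC.
by rewrite /agreement_graph (negbTE (t'T.1 x)).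
Qed.

Lemma agreement_graph_consistent : consistent_with S t' (agreement_graph t t') t.
Proof.
move=> v w _ _ vw; have wv : w != v.
  by apply: contraTneq vw => ->; exact: t'T.1.
by rewrite /agreement_graph vw (t'T.2 w v wv) vw /= orbF.
Qed.

Lemma card_non_neighbours_agreement_graph v : is_tournament t ->
  (#|non_neighbours S (agreement_graph t t') v|
     <= sym_degree (fun x y => t x y && ~~ t' x y) v)%N.
Proof.
move=> tT; apply/subset_leq_card/subsetP => w; rewrite !inE /agreement_graph.
case/and3P=> _ wv; have vw : v != w by rewrite eq_sym.
rewrite (t'T.2 w v wv) (tT.2 w v wv).
by case: (t' v w); case: (t v w).
Qed.

End AgreementGraph.

Lemma twice_le_four_times (R : realFieldType) (d n N : R) :
  0 < d -> d < 2^-1 -> 0 <= n -> (1 - d) * n <= N -> 2 * d * n <= 4 * d * N.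
Proof.
move=> d_gt0 d_lt n_ge0 nN.
have d2 : 0 <= 1 - 2 * d by lra.
have h1 : 0 <= d * (N - (1 - d) * n) by rewrite mulr_ge0 ?subr_ge0 // ltW.
have h2 : 0 <= d * n * (1 - 2 * d) by rewrite !mulr_ge0 // ltW.
lra.
Qed.

Theorem lemma4p2 (R : realFieldType) (V : finType) (t0 : rel V) (delta : R) :
  0 < delta -> delta < 2^-1 ->
  is_tournament t0 ->
  close_to_transitive t0 (delta ^+ 2) ->
  exists (N : nat) (S : {set V}),
    (1 - delta) * (#|V|%:R) <= N%:R /\ #|S| = N /\
    exists lt e : rel V,
      strict_linear_order_on S lt /\ simple_graph_on S e /\
      consistent_with S lt e t0 /\
      (forall v, v \in S -> (#|non_neighbours S e v|%:R <= 4 * delta * N%:R)).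
Proof.
move=> d_gt0 d_lt_half t0T [t [tT reversed_le]].
set reversed := fun v w => t0 v w && ~~ t v w.
set bad := [set v | 2 * delta * #|V|%:R < (sym_degree reversed v)%:R].
have good_ge : (1 - delta) * #|V|%:R <= #|~: bad|%:R.
  exact/card_setC_ge/(card_high_sym_degree_le d_gt0 reversed_le).
exists #|~: bad|, (~: bad); do 2!split=> //.
exists t, (agreement_graph t0 t); split.
  exact: transitive_tournament_strict_linear_order.
split; first exact: agreement_graph_simple tT.1.
split; first exact: agreement_graph_consistent tT.1.
move=> v; rewrite !inE -leNgt => deg_le.
rewrite (le_trans _ (twice_le_four_times d_gt0 d_lt_half (ler0n _ _) good_ge)) //.
rewrite (le_trans _ deg_le) // ler_nat.
exact: card_non_neighbours_agreement_graph tT.1 _ t0T.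
Qed.
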